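(* Let $G$ and $H$ be fully supported graphs with no self-loops. Then $G$ and $H$ are strongly disjoint if and only if they are weakly disjoint and exactly one of the two graphs is a forest.
   Context: A weight function on finite $U$ is $\alpha:U\times U\to\mathbb{R}$, $\alpha\ge0$, symmetric, summing to $1$; degree $p(u)=\sum_{u'}\alpha(u,u')$. A graph is $G=(U,\alpha)$ with edges $(u,u')$ where $\alpha(u,u')>0$; a self-loop is an edge $(u,u)$; $G$ is fully supported if $p(u)>0$ for all $u$; a forest is a graph with no cycles (as an undirected graph). For graphs $(U,\alpha)$, $(V,\beta)$ with degrees $p,q$, a weight joining is a weight function $\gamma$ on $U\times V$ with degree $r(u,v)=\sum_{(u',v')}\gamma((u,v),(u',v'))$ such that $\sum_v r(u,v)=p(u)$, $\sum_u r(u,v)=q(v)$, $p(u)\sum_{\tilde v}\gamma((u,v),(u',\tilde v))=\alpha(u,u')r(u,v)$ and $q(v)\sum_{\tilde u}\gamma((u,v),(\tilde u,v'))=\beta(v,v')r(u,v)$ for all $u,u',v,v'$. The graphs are strongly disjoint if the only weight joining is $\alpha\otimes\beta$, $(\alpha\otimes\beta)((u,v),(u',v'))=\alpha(u,u')\beta(v,v')$; weakly disjoint if every weight joining has degree $r(u,v)=p(u)q(v)$. *)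

From HB Require Import structures.
From mathcomp Require Import all_boot all_order all_algebra.
From mathcomp Require Import reals.
Set Implicit Arguments. Unset Strict Implicit. Unset Printing Implicit Defensive.
Import Order.TTheory GRing.Theory Num.Theory.
Local Open Scope ring_scope.

Section Defs.
Variable R : realType.

Definition weight_fun (T : finType) (a : T -> T -> R) : Prop :=
  [/\ (forall x y, 0 <= a x y),
      (forall x y, a x y = a y x) &
      \sum_(x : T) \sum_(y : T) a x y = 1].

Definition deg (T : finType) (a : T -> T -> R) (x : T) : R := \sum_(y : T) a x y.

Definition fully_supported (T : finType) (a : T -> T -> R) : Prop :=
  forall x, 0 < deg a x.

Definition edge (T : finType) (a : T -> T -> R) : rel T := fun x y => 0 < a x y.

Definition no_self_loops (T : finType) (a : T -> T -> R) : Prop :=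
  forall x, ~~ edge a x x.

Definition has_cycle (T : finType) (a : T -> T -> R) : Prop :=
  exists s : seq T, [/\ (3 <= size s)%N, uniq s & cycle (edge a) s].

(* forest: no cycles (a self-loop also counts as a cycle) *)
Definition forest (T : finType) (a : T -> T -> R) : Prop :=
  no_self_loops a /\ ~ has_cycle a.

Definition tensor (U V : finType) (a : U -> U -> R) (b : V -> V -> R)
  : U * V -> U * V -> R := fun x y => a x.1 y.1 * b x.2 y.2.

Definition weight_joining (U V : finType) (a : U -> U -> R) (b : V -> V -> R)
  (g : U * V -> U * V -> R) : Prop :=
  [/\ weight_fun g,
      (forall u, \sum_(v : V) deg g (u, v) = deg a u),
      (forall v, \sum_(u : U) deg g (u, v) = deg b v),
      (forall u u' v, deg a u * \sum_(v' : V) g (u, v) (u', v') = a u u' * deg g (u, v)) &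
      (forall u v v', deg b v * \sum_(u' : U) g (u, v) (u', v') = b v v' * deg g (u, v))].

Definition strongly_disjoint (U V : finType) (a : U -> U -> R) (b : V -> V -> R) : Prop :=
  forall g, weight_joining a b g -> forall x y, g x y = tensor a b x y.

Definition weakly_disjoint (U V : finType) (a : U -> U -> R) (b : V -> V -> R) : Prop :=
  forall g, weight_joining a b g -> forall u v, deg g (u, v) = deg a u * deg b v.

End Defs.

(* On the fibre over (v, v'), a weight joining g whose degree is p * q restricts to
   a nonnegative matrix on U supported by the edges of alpha, with row and column
   sums beta(v, v') * p.  On a forest such a matrix is unique, since a leaf carries
   at most one nonzero entry of its row and of its column; hence weak disjointness
   and one forest force g = alpha (x) beta.  Conversely, alpha (x) beta + F (x) D is
   another weight joining whenever F (x) D <> 0 and F, D are antisymmetric, dominated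
   by alpha, beta and compatible with the degree conditions: if both graphs are
   forests, take F, D to be alpha, beta signed by a 2-colouring; if neither is, take
   small circulations around a cycle of each. *)

From Stdlib Require Import Classical.
From mathcomp Require Import all_boot all_order all_algebra.
From mathcomp Require Import reals ring lra.
Set Implicit Arguments. Unset Strict Implicit. Unset Printing Implicit Defensive.
Import Order.TTheory GRing.Theory Num.Theory.

Lemma sumr_support_le1_eq0 (R : zmodType) (I : finType) (A : {set I}) (f : I -> R) :
  #|A| <= 1 -> (forall i, i \notin A -> f i = 0%R) -> (\sum_i f i = 0)%R ->
  forall i, f i = 0%R.
Proof.
move=> A_le1 f_out sum0 i; have [iA | /f_out //] := boolP (i \in A).
move: sum0; rewrite (bigD1 i) //= big1 ?addr0 // => j ji; apply: f_out.
by apply: contra ji => jA; rewrite (card_le1_eqP A_le1 j i).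
Qed.

Section AcyclicGraph.
Variables (T : finType) (e : rel T).
Hypotheses (e_sym : symmetric e) (e_irr : irreflexive e).
Hypothesis acyclic : ~ exists s : seq T, [/\ 3 <= size s, uniq s & cycle e s].

Definition nbrs (S : {set T}) v := [set w in S | e v w].

Lemma acyclic_no_chord x z q y :
  path e x (z :: q) -> uniq [:: x, z & q] -> y \in q -> ~~ e y x.
Proof.
move=> pxq uxq /splitPr q_y; case: q_y pxq uxq => q1 q2 pxq uxq.
apply/negP => eyx; apply: acyclic; exists [:: x, z & rcons q1 y]; split.
- by rewrite /= size_rcons.
- by move: uxq; rewrite -!cat_cons -cat_rcons cat_uniq => /andP[].
- move: pxq; rewrite -cat_rcons -cat_cons cat_path => /andP[pxq _].
  by rewrite /= rcons_path last_rcons eyx andbT.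
Qed.

Lemma acyclic_path_extend (S : {set T}) x p :
  (forall v, v \in S -> 1 < #|nbrs S v|) ->
  path e x p -> uniq (x :: p) -> {subset x :: p <= S} ->
  exists y, [/\ path e y (x :: p), uniq [:: y, x & p] & y \in S].
Proof.
move=> two_nbrs pxp uxp pS.
have /card_gt0P [y]: 0 < #|nbrs S x :\ head x p|.
  have := two_nbrs x (pS x (mem_head x p)).
  by rewrite (cardsD1 (head x p)); case: (_ \in _) => // /ltnW.
rewrite !inE => /andP[y_new /andP[yS exy]].
have yNx : y != x by apply: contraTneq exy => ->; rewrite e_irr.
exists y; split=> //; first by rewrite /= e_sym exy.
rewrite (cons_uniq y) uxp andbT inE negb_or yNx /=.
case: p y_new pxp uxp {pS} => [|z q] //= yNz pxp uxp.
rewrite inE negb_or yNz /=; apply: contraL exy => yq.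
by rewrite e_sym; apply: acyclic_no_chord pxp uxp yq.
Qed.

Lemma acyclic_leaf (S : {set T}) :
  S != set0 -> exists2 v, v \in S & #|nbrs S v| <= 1.
Proof.
move=> /set0Pn [x0 x0S]; apply/exists_inP; apply: contraT => no_leaf.
have two_nbrs v : v \in S -> 1 < #|nbrs S v|.
  by move=> vS; rewrite ltnNge; apply: contra no_leaf => leaf; apply/exists_inP; exists v.
have long_path n : exists x p,
    [/\ size p = n, path e x p, uniq (x :: p) & {subset x :: p <= S}].
  elim: n => [|n [x [p [<- pxp uxp pS]]]].
    by exists x0, [::]; split=> // y; rewrite inE => /eqP ->.
  have [y [pyp uyp yS]] := acyclic_path_extend two_nbrs pxp uxp pS.
  by exists y, (x :: p); split=> // w; rewrite inE => /predU1P [-> | /pS].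
have [x [p [size_p _ uxp _]]] := long_path #|T|.
by have := max_card (mem (x :: p)); rewrite (card_uniqP uxp) /= size_p ltnn.
Qed.

Lemma acyclic_set_ind (P : {set T} -> Prop) :
  P set0 ->
  (forall (S : {set T}) v, v \in S -> #|nbrs S v| <= 1 -> P (S :\ v) -> P S) ->
  forall S, P S.
Proof.
move=> P0 P_leaf S; elim: {S}_.+1 {-2}S (ltnSn #|S|) => // n IH S.
case: (eqVneq S set0) => [-> // | /acyclic_leaf [v vS leaf] ltSn].
apply: (P_leaf _ _ vS leaf); apply: IH.
by move: ltSn; rewrite (cardsD1 v) vS.
Qed.

Lemma acyclic_two_colouring : exists c : T -> bool, forall x y, e x y -> c x != c y.
Proof.
suff [c c_ok] : exists c : T -> bool,
    {in [set: T] &, forall x y, e x y -> c x != c y}.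
  by exists c => x y; apply: c_ok; rewrite inE.
elim/acyclic_set_ind: [set: T] => [|S v vS leaf [c c_ok]].
  by exists xpredT => x; rewrite inE.
pose cv := if [pick w in nbrs S v] is Some w then ~~ c w else true.
have cvE y : y \in S -> e v y -> cv = ~~ c y.
  have y_nbr : y \in S -> e v y -> y \in nbrs S v by rewrite inE => -> ->.
  move=> yS evy; rewrite /cv; case: pickP => [w w_nbr | /(_ y)].
    by rewrite (card_le1_eqP leaf w y) ?y_nbr.
  by rewrite y_nbr.
exists (fun x => if x == v then cv else c x) => x y xS yS exy.
case: (eqVneq x v) => [xv | xNv]; case: (eqVneq y v) => [yv | yNv].
- by move: exy; rewrite xv yv e_irr.
- by rewrite (cvE y) -?xv //; case: (c y).
- by rewrite (cvE x) 1?e_sym -?yv //; case: (c x).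
- by apply: c_ok; rewrite // !inE ?xNv ?yNv.
Qed.

Lemma acyclic_zero_margins (R : zmodType) (D : T -> T -> R) :
  (forall x y, D x y != 0%R -> e x y) ->
  (forall x, \sum_y D x y = 0)%R -> (forall y, \sum_x D x y = 0)%R ->
  forall x y, D x y = 0%R.
Proof.
move=> D_edge rows cols.
have D_nonedge x y : ~~ e x y -> D x y = 0%R.
  by move=> nexy; apply/eqP; apply: contraNT nexy; apply: D_edge.
suff D0 (S : {set T}) : (forall x y, x \notin S -> D x y = 0%R /\ D y x = 0%R) ->
    forall x y, D x y = 0%R.
  by apply: (D0 setT) => x y; rewrite inE.
elim/acyclic_set_ind: S => [|S v vS leaf IH] D_out x y.
  by have [] := D_out x y (negbT (in_set0 x)).
apply: IH => {x y} x y; rewrite !inE negb_and negbK => /orP [/eqP -> | /D_out //].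
split.
- move: y; apply: (sumr_support_le1_eq0 leaf) (rows v) => w.
  by rewrite inE negb_and => /orP [/(D_out _ v) [] | /D_nonedge].
- move: y; apply: (sumr_support_le1_eq0 leaf) (cols v) => w.
  by rewrite inE negb_and e_sym => /orP [/(D_out _ v) [] | /D_nonedge].
Qed.
End AcyclicGraph.

Local Open Scope ring_scope.

Section Weights.
Variable R : realType.

Definition dominated_flow (T : finType) (a F : T -> T -> R) :=
  (forall x y, F y x = - F x y) /\ (forall x y, `|F x y| <= a x y).

Lemma nonedge_eq0 (T : finType) (a : T -> T -> R) x y :
  0 <= a x y -> ~~ edge a x y -> a x y = 0.
Proof. by rewrite /edge lt0r => -> /nandP [/negbNE /eqP | //]. Qed.

Lemma weight_has_edge (T : finType) (a : T -> T -> R) :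
  weight_fun a -> exists x y, edge a x y.
Proof.
case=> a0 _ a1.
have : \sum_(p : T * T) a p.1 p.2 <> 0 by rewrite -pair_bigA a1; apply/eqP/oner_neq0.
by case/(psumr_neq0P (fun p _ => a0 p.1 p.2)) => -[x y] /andP [_ a_xy]; exists x, y.
Qed.

Lemma not_forest_has_cycle (T : finType) (a : T -> T -> R) :
  no_self_loops a -> ~ forest a -> has_cycle a.
Proof. by move=> loopless not_forest; apply: NNPP => no_cycle; apply: not_forest; split. Qed.

Lemma sum_deg_antisym (T : finType) (F : T -> T -> R) :
  (forall x y, F y x = - F x y) -> \sum_x deg F x = 0.
Proof.
move=> F_anti; have : \sum_x deg F x = - \sum_x deg F x.
  transitivity (\sum_y \sum_x F x y); first exact: exchange_big.
  rewrite -sumrN; apply: eq_bigr => y _.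
  by rewrite /deg -sumrN; apply: eq_bigr => x _.
by move/eqP; rewrite -addr_eq0 -mulr2n mulrn_eq0 => /eqP.
Qed.

Lemma forest_margins_unique (T : finType) (a M : T -> T -> R) (c : R) :
  (forall x y, 0 <= a x y) -> (forall x y, a x y = a y x) -> forest a ->
  (forall x y, ~~ edge a x y -> M x y = 0) ->
  (forall x, \sum_y M x y = c * deg a x) -> (forall y, \sum_x M x y = c * deg a y) ->
  forall x y, M x y = c * a x y.
Proof.
move=> a0 a_sym [loopless no_cycle] M_out rows cols x y; apply/eqP; rewrite -subr_eq0.
apply/eqP; move: x y; apply: (acyclic_zero_margins _ _ no_cycle).
- by move=> x y; rewrite /edge a_sym.
- by move=> x; apply/negbTE/loopless.
- move=> x y; apply: contraR => nexy.
  by rewrite M_out // nonedge_eq0 // mulr0 subrr.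
- by move=> x; rewrite sumrB rows -mulr_sumr subrr.
- move=> y; rewrite sumrB cols -mulr_sumr /deg.
  by under eq_bigr do rewrite a_sym; rewrite subrr.
Qed.

Lemma forest_signed_flow (T : finType) (a : T -> T -> R) :
  (forall x y, 0 <= a x y) -> (forall x y, a x y = a y x) -> forest a ->
  exists c : T -> bool, dominated_flow a (fun x y => (-1) ^+ c x * a x y).
Proof.
move=> a0 a_sym [loopless no_cycle].
have [c c_ok] : exists c : T -> bool, forall x y, edge a x y -> c x != c y.
  apply: (acyclic_two_colouring _ _ no_cycle).
  - by move=> x y; rewrite /edge a_sym.
  - by move=> x; apply/negbTE/loopless.
exists c; split=> [x y | x y]; last by rewrite normrM normr_sign mul1r ger0_norm.
have [/c_ok | /(nonedge_eq0 (a0 x y)) axy0] := boolP (edge a x y).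
  by rewrite a_sym; case: (c x); case: (c y) => //= _; rewrite expr0 expr1 mulN1r mul1r ?opprK.
by rewrite -a_sym axy0 !mulr0 oppr0.
Qed.

Lemma edge_weight_lower_bound (T : finType) (a : T -> T -> R) :
  exists2 eps, 0 < eps & forall x y, edge a x y -> eps <= a x y.
Proof.
exists (\big[Order.min/1]_(x | edge a x.1 x.2) a x.1 x.2).
  by apply: lt_bigmin => // -[x y].
by move=> x y; apply: (bigmin_le_cond _ (fun p : T * T => a p.1 p.2) (j := (x, y))).
Qed.

Definition circulation (T : finType) (s : seq T) (x y : T) : R :=
  ((x \in s) && (y == next s x))%:R - ((y \in s) && (x == next s y))%:R.

Lemma circulation_antisym (T : finType) (s : seq T) x y :
  circulation s y x = - circulation s x y.
Proof. by rewrite /circulation opprB. Qed.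

Lemma circulation_norm_le1 (T : finType) (s : seq T) x y : `|circulation s x y| <= 1.
Proof.
by rewrite /circulation; do 2 case: (_ && _); rewrite /= ?subrr ?normr0 ?subr0 ?sub0r ?normrN ?normr1.
Qed.

Lemma deg_circulation (T : finType) (s : seq T) x : uniq s -> deg (circulation s) x = 0.
Proof.
move=> s_uniq.
have sum_ind (P : bool) (z : T) : \sum_y (P && (y == z))%:R = P%:R :> R.
  rewrite (bigD1 z) //= eqxx andbT big1 ?addr0 // => y /negbTE ->.
  by rewrite andbF.
have prevE y : (y \in s) && (x == next s y) = (x \in s) && (y == prev s x).
  apply/andP/andP => [[ys /eqP ->] | [xs /eqP ->]]; last by rewrite mem_prev next_prev.
  by rewrite mem_next prev_next.
by rewrite /deg /circulation sumrB sum_ind; under eq_bigr do rewrite prevE; rewrite sum_ind subrr.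
Qed.

Lemma circulation_edge (T : finType) (e : rel T) (s : seq T) x y :
  symmetric e -> cycle e s -> circulation s x y != 0 -> e x y.
Proof.
move=> e_sym s_cycle; rewrite /circulation.
have [/andP [xs /eqP ->] _ | _] := boolP ((x \in s) && (y == next s x)).
  exact: next_cycle.
have [/andP [ys /eqP ->] _ | _] := boolP ((y \in s) && (x == next s y)).
  by rewrite e_sym next_cycle.
by rewrite subrr eqxx.
Qed.

Lemma circulation_head (T : finType) (z0 z1 z2 : T) t :
  uniq [:: z0, z1, z2 & t] -> circulation [:: z0, z1, z2 & t] z0 z1 = 1.
Proof.
rewrite /= !inE negb_or => /andP [/andP [z01 /norP [z02 _]] _].
rewrite /circulation /next /= !eqxx /= (eq_sym z1 z0) (negbTE z01) (negbTE z02) !inE !eqxx /=.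
by rewrite andbF subr0.
Qed.

Lemma cycle_circulation (T : finType) (a : T -> T -> R) :
  (forall x y, 0 <= a x y) -> (forall x y, a x y = a y x) -> has_cycle a ->
  exists F, [/\ dominated_flow a F, forall x, deg F x = 0 & exists x y, F x y != 0].
Proof.
move=> a0 a_sym [s [s_size s_uniq s_cycle]].
case: s s_size s_uniq s_cycle => [|z0 [|z1 [|z2 t]]] // _ s_uniq s_cycle.
have [eps eps_gt0 eps_le] := edge_weight_lower_bound a.
have e_sym : symmetric (edge a) by move=> x y; rewrite /edge a_sym.
set s := [:: z0, z1, z2 & t] in s_uniq s_cycle *.
exists (fun x y => eps * circulation s x y); split.
- split=> x y; first by rewrite circulation_antisym mulrN.
  have [-> | /(circulation_edge e_sym s_cycle) /eps_le exy] := eqVneq (circulation s x y) 0.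
    by rewrite mulr0 normr0.
  rewrite normrM (gtr0_norm eps_gt0) (le_trans _ exy) // ler_piMr ?circulation_norm_le1 //.
  exact: ltW.
- move=> x; have := deg_circulation x s_uniq.
  by rewrite /deg -mulr_sumr => ->; rewrite mulr0.
- by exists z0, z1; rewrite circulation_head // mulr1 lt0r_neq0.
Qed.

Section Flip.
Variables U V : finType.

Definition flip_weight (g : U * V -> U * V -> R) : V * U -> V * U -> R :=
  fun x y => g (x.2, x.1) (y.2, y.1).

Lemma sum_flip (f : U * V -> R) : \sum_(x : V * U) f (x.2, x.1) = \sum_x f x.
Proof.
rewrite [RHS](reindex (fun x : V * U => (x.2, x.1))) //.
by exists (fun x => (x.2, x.1)) => -[].
Qed.

Lemma deg_flip g x : deg (flip_weight g) x = deg g (x.2, x.1).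
Proof. exact: sum_flip. Qed.

Lemma weight_joining_flip a b g :
  weight_joining a b g -> weight_joining b a (flip_weight g).
Proof.
case=> [[g0 g_sym g1] marg_a marg_b cond_a cond_b]; split.
- split=> [x y | x y | ]; [exact: g0 | exact: g_sym | ].
  transitivity (\sum_x deg g (x.2, x.1)); last by rewrite sum_flip.
  by apply: eq_bigr => x _; apply: deg_flip.
- move=> v; rewrite -marg_b; apply: eq_bigr => u _; exact: deg_flip.
- move=> u; rewrite -marg_a; apply: eq_bigr => v _; exact: deg_flip.
- by move=> v v' u; rewrite deg_flip; apply: cond_b.
- by move=> v u u'; rewrite deg_flip; apply: cond_a.
Qed.

End Flip.

Section Joinings.
Variables (U V : finType) (a : U -> U -> R) (b : V -> V -> R).

Lemma sum_pair_mul (f : U -> R) (h : V -> R) :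
  \sum_(x : U * V) f x.1 * h x.2 = (\sum_u f u) * (\sum_v h v).
Proof.
rewrite -(pair_bigA _ (fun u v => f u * h v)) mulr_suml; apply: eq_bigr => u _.
by rewrite mulr_sumr.
Qed.

Lemma deg_tensor (F : U -> U -> R) (D : V -> V -> R) x :
  deg (tensor F D) x = deg F x.1 * deg D x.2.
Proof. by rewrite -sum_pair_mul. Qed.

Lemma strongly_weakly_disjoint : strongly_disjoint a b -> weakly_disjoint a b.
Proof.
move=> sd g g_join u v; rewrite -(deg_tensor a b (u, v)).
by apply: eq_bigr => y _; apply: sd.
Qed.

Lemma strongly_disjoint_flip : strongly_disjoint b a -> strongly_disjoint a b.
Proof.
move=> sd g /weight_joining_flip /sd g_eq [u v] [u' v'].
by rewrite /tensor mulrC; apply: (g_eq (v, u) (v', u')).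
Qed.

Lemma weakly_disjoint_flip : weakly_disjoint a b -> weakly_disjoint b a.
Proof.
move=> wd g /weight_joining_flip /wd deg_eq v u.
by rewrite mulrC -deg_eq deg_flip.
Qed.

Lemma weakly_disjoint_forest_strongly_disjoint :
  weight_fun a -> weight_fun b -> fully_supported a -> fully_supported b ->
  forest a -> weakly_disjoint a b -> strongly_disjoint a b.
Proof.
move=> [a0 a_sym _] [b0 b_sym _] a_pos b_pos a_forest wd g g_join [u v] [u' v'].
have deg_g := wd g g_join.
case: g_join => [[g0 g_sym _] _ _ cond_a cond_b].
have sum_snd x x' y : \sum_w g (x, y) (x', w) = a x x' * deg b y.
  by apply: (mulfI (lt0r_neq0 (a_pos x))); rewrite cond_a deg_g mulrCA.
have sum_fst x y y' : \sum_w g (x, y) (w, y') = b y y' * deg a x.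
  by apply: (mulfI (lt0r_neq0 (b_pos y))); rewrite cond_b deg_g; ring.
rewrite /tensor /= mulrC; move: u u'.
apply: (forest_margins_unique a0 a_sym a_forest) => [x x' nexx' | x | x'].
- apply: (psumr_eq0P (P := xpredT) (fun w _ => g0 (x, v) (x', w))) => //.
  by rewrite sum_snd nonedge_eq0 ?mul0r.
- exact: sum_fst.
- by under eq_bigr do rewrite g_sym; rewrite sum_fst b_sym.
Qed.

Lemma perturbed_weight_joining (F : U -> U -> R) (D : V -> V -> R) :
  weight_fun a -> weight_fun b -> dominated_flow a F -> dominated_flow b D ->
  (forall u u' v, deg a u * F u u' * deg D v = a u u' * deg F u * deg D v) ->
  (forall v v' u, deg b v * D v v' * deg F u = b v v' * deg D v * deg F u) ->
  weight_joining a b (fun x y => tensor a b x y + tensor F D x y).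
Proof.
move=> [a0 a_sym a1] [b0 b_sym b1] [F_anti F_le] [D_anti D_le] compat_a compat_b.
have deg_pert x : deg (fun x y => tensor a b x y + tensor F D x y) x =
    deg a x.1 * deg b x.2 + deg F x.1 * deg D x.2.
  by rewrite /deg big_split -!/(deg _ _) !deg_tensor.
have sumF := sum_deg_antisym F_anti; have sumD := sum_deg_antisym D_anti.
split.
- split=> [x y | x y | ].
  + have := ler_pM (normr_ge0 _) (normr_ge0 _) (F_le x.1 y.1) (D_le x.2 y.2).
    by rewrite -normrM /tensor ler_norml => /andP [? _]; lra.
  + by rewrite /tensor a_sym b_sym F_anti D_anti mulrNN.
  + transitivity (\sum_x (deg a x.1 * deg b x.2 + deg F x.1 * deg D x.2)).
      by apply: eq_bigr => x _; rewrite -deg_pert.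
    by rewrite big_split /= !sum_pair_mul a1 b1 sumF mulr1 mul0r addr0.
- move=> u; rewrite (eq_bigr _ (fun v _ => deg_pert (u, v))) big_split /=.
  by rewrite -!mulr_sumr b1 sumD mulr1 mulr0 addr0.
- move=> v; rewrite (eq_bigr _ (fun u _ => deg_pert (u, v))) big_split /=.
  by rewrite -!mulr_suml a1 sumF mul1r mul0r addr0.
- move=> u u' v; rewrite deg_pert big_split /tensor /= -!mulr_sumr -/(deg b v) -/(deg D v).
  by rewrite mulrDr [deg a u * (F u u' * _)]mulrA compat_a; ring.
- move=> u v v'; rewrite deg_pert big_split /tensor /= -!mulr_suml -/(deg a u) -/(deg F u).
  by rewrite mulrDr (mulrC (deg F u)) [deg b v * (D v v' * _)]mulrA compat_b; ring.
Qed.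

Lemma perturbation_not_strongly_disjoint (F : U -> U -> R) (D : V -> V -> R) x x' y y' :
  weight_fun a -> weight_fun b -> dominated_flow a F -> dominated_flow b D ->
  (forall u u' v, deg a u * F u u' * deg D v = a u u' * deg F u * deg D v) ->
  (forall v v' u, deg b v * D v v' * deg F u = b v v' * deg D v * deg F u) ->
  F x x' * D y y' != 0 -> ~ strongly_disjoint a b.
Proof.
move=> wa wb flow_a flow_b compat_a compat_b /eqP FD_neq0 sd; apply: FD_neq0.
have := sd _ (perturbed_weight_joining wa wb flow_a flow_b compat_a compat_b) (x, y) (x', y').
by rewrite -[RHS]addr0 => /addrI.
Qed.

Lemma forests_not_strongly_disjoint :
  weight_fun a -> weight_fun b -> forest a -> forest b -> ~ strongly_disjoint a b.
Proof.
move=> wa wb a_forest b_forest.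
have [[a0 a_sym _] [b0 b_sym _]] := (wa, wb).
have [c flow_a] := forest_signed_flow a0 a_sym a_forest.
have [d flow_b] := forest_signed_flow b0 b_sym b_forest.
have [u [u' e_uu']] := weight_has_edge wa.
have [v [v' e_vv']] := weight_has_edge wb.
apply: (perturbation_not_strongly_disjoint (x := u) (x' := u') (y := v) (y' := v') wa wb flow_a flow_b).
- by move=> x x' y; rewrite /deg -!mulr_sumr; ring.
- by move=> y y' x; rewrite /deg -!mulr_sumr; ring.
- by rewrite !mulf_neq0 ?signr_eq0 ?lt0r_neq0.
Qed.

Lemma cycles_not_strongly_disjoint :
  weight_fun a -> weight_fun b -> has_cycle a -> has_cycle b -> ~ strongly_disjoint a b.
Proof.
move=> wa wb a_cycle b_cycle.
have [[a0 a_sym _] [b0 b_sym _]] := (wa, wb).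
have [F [flow_a degF0 [u [u' Fuu']]]] := cycle_circulation a0 a_sym a_cycle.
have [D [flow_b degD0 [v [v' Dvv']]]] := cycle_circulation b0 b_sym b_cycle.
apply: (perturbation_not_strongly_disjoint (x := u) (x' := u') (y := v) (y' := v') wa wb flow_a flow_b).
- by move=> *; rewrite !degD0 !mulr0.
- by move=> *; rewrite !degF0 !mulr0.
- exact: mulf_neq0.
Qed.

End Joinings.

End Weights.

Theorem corollary5p6 (R : realType) (U V : finType)
  (alpha : U -> U -> R) (beta : V -> V -> R) :
  weight_fun alpha -> weight_fun beta ->
  fully_supported alpha -> fully_supported beta ->
  no_self_loops alpha -> no_self_loops beta ->
  (strongly_disjoint alpha beta <->
   weakly_disjoint alpha beta /\
   ((forest alpha /\ ~ forest beta) \/ (~ forest alpha /\ forest beta))).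
Proof.
move=> wa wb a_pos b_pos a_loopless b_loopless; split=> [sd | [wd one_forest]].
  split; first exact: strongly_weakly_disjoint.
  have [a_forest | a_not_forest] := classic (forest alpha).
    have [b_forest | b_not_forest] := classic (forest beta); last by left.
    by case: (forests_not_strongly_disjoint wa wb a_forest b_forest).
  have [b_forest | b_not_forest] := classic (forest beta); first by right.
  by case: (cycles_not_strongly_disjoint wa wb (not_forest_has_cycle a_loopless a_not_forest)
    (not_forest_has_cycle b_loopless b_not_forest)).
case: one_forest => [[a_forest _] | [_ b_forest]].
  exact: weakly_disjoint_forest_strongly_disjoint.
apply: strongly_disjoint_flip.
exact: weakly_disjoint_forest_strongly_disjoint (weakly_disjoint_flip wd).
Qed.
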